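(* (a) Let $\mathbf{x}=(x_s)\in(\mathbb{C}^* )^{\mathbb{Z}^3}$ be a coherent solution of the Kashaev equation such that $x_vx_{v+e_i+e_j}+x_{v+e_i}x_{v+e_j}\neq0$ for all $v\in\mathbb{Z}^3$ and all distinct $i,j\in\{1,2,3\}$ (where $e_1,e_2,e_3$ are the standard basis vectors). Then $\mathbf{x}$ can be extended to an array $\tilde{\mathbf{x}}=(x_s)\in\mathbb{C}^L$ satisfying the K-hexahedron equations. (b) Conversely, if $\tilde{\mathbf{x}}=(x_s)\in\mathbb{C}^L$, with $x_s\neq0$ for all $s\in\mathbb{Z}^3$, satisfies the K-hexahedron equations, then the restriction of $\tilde{\mathbf{x}}$ to $\mathbb{Z}^3$ is a coherent solution of the Kashaev equation.
   Context: For a unit cube $C$ in $\mathbb{Z}^3$ and $\mathbf{x}\in\mathbb{C}^{\mathbb{Z}^3}$, label the values at the vertices of $C$ as $z_{ijk}$ ($i,j,k\in\{0,1\}$) via a cube isomorphism $C\cong\{0,1\}^3$; put $a=z_{000}z_{111}$, $b=z_{100}z_{011}$, $c=z_{010}z_{101}$, $d=z_{001}z_{110}$, $s=z_{000}z_{011}z_{101}z_{110}$, $t=z_{111}z_{100}z_{010}z_{001}$ and $K^C(\mathbf{x})=2(a^2+b^2+c^2+d^2)-(a+b+c+d)^2-4(s+t)$. For a vertex $v$ of $C$, choosing the labeling with $z_{000}=x_v$, set $K^C_v(\mathbf{x})=\tfrac12\big(z_{111}z_{000}^2-z_{000}(z_{100}z_{011}+z_{010}z_{101}+z_{001}z_{110})\big)-z_{100}z_{010}z_{001}$.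 An array $\mathbf{x}\in\mathbb{C}^{\mathbb{Z}^3}$ is a coherent solution of the Kashaev equation if $K^C(\mathbf{x})=0$ for every unit cube $C$ and, for every $v\in\mathbb{Z}^3$, $\prod_{C\ni v}K^C_v(\mathbf{x})=\prod_{S\ni v}(x_vx_{v_2}+x_{v_1}x_{v_3})$, the first product over the $8$ unit cubes containing $v$, the second over the $12$ unit squares $S$ containing $v$, with $v,v_1,v_2,v_3$ the vertices of $S$ in cyclic order. $L=\{(i,j,k)\in\mathbb{R}^3: 2i,2j,2k,i+j+k\in\mathbb{Z}\}=\mathbb{Z}^3+\{(0,0,0),(0,\tfrac12,\tfrac12),(\tfrac12,0,\tfrac12),(\tfrac12,\tfrac12,0)\}$, i.e. $\mathbb{Z}^3$ together with the centers of unit squares. An array $\tilde{\mathbf{x}}=(x_s)\in\mathbb{C}^L$ with $x_s\ne0$ for $s\in\mathbb{Z}^3$ satisfies the K-hexahedron equations if (i) for every $s\in L\setminus\mathbb{Z}^3$, $x_s^2=x_{v_1}x_{v_3}+x_{v_2}x_{v_4}$, where $v_1,v_2,v_3,v_4$ are the vertices, in cyclic order, of the unit square centered at $s$; and (ii) for every $v\in\mathbb{Z}^3$, writing $z_{ijk}=x_{v+(i,j,k)}$, $z_{1\frac12\frac12}=(z_{\frac120\frac12}z_{\frac12\frac120}+z_{0\frac12\frac12}z_{100})/z_{000}$, $z_{\frac121\frac12}=(z_{0\frac12\frac12}z_{\frac12\frac120}+z_{\frac120\frac12}z_{010})/z_{000}$, $z_{\frac12\frac121}=(z_{0\frac12\frac12}z_{\frac120\frac12}+z_{\frac12\frac120}z_{001})/z_{000}$,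 $z_{111}=(A+2z_{0\frac12\frac12}z_{\frac120\frac12}z_{\frac12\frac120})/z_{000}^2$, where $A=2z_{100}z_{010}z_{001}+z_{000}(z_{100}z_{011}+z_{010}z_{101}+z_{001}z_{110})$. *)

From HB Require Import structures.
From mathcomp Require Import all_boot all_order all_algebra.
From mathcomp Require Import complex.
From mathcomp Require Import Rstruct.
Set Implicit Arguments.
Unset Strict Implicit.
Unset Printing Implicit Defensive.
Import Order.TTheory GRing.Theory Num.Theory.
Local Open Scope ring_scope.

Definition CC : fieldType := (Rdefinitions.R)[i].

Definition arr3 := int -> int -> int -> CC.

Definition KC (x : arr3) (a b c : int) : CC :=
  let z i j k := x (a + i) (b + j) (c + k) in
  let A := z 0 0 0 * z 1 1 1 in
  let B := z 1 0 0 * z 0 1 1 in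
  let Cc := z 0 1 0 * z 1 0 1 in
  let D := z 0 0 1 * z 1 1 0 in
  let s := z 0 0 0 * z 0 1 1 * z 1 0 1 * z 1 1 0 in
  let t := z 1 1 1 * z 1 0 0 * z 0 1 0 * z 0 0 1 in
  2 * (A ^+ 2 + B ^+ 2 + Cc ^+ 2 + D ^+ 2) - (A + B + Cc + D) ^+ 2
    - 4 * (s + t).

(** The unit cubes containing v = (a,b,c) are indexed by sign vectors
    (e1,e2,e3) in {1,-1}^3: the cube with vertices v + (e1 i, e2 j, e3 k),
    i,j,k in {0,1}. *)
Definition KCv (x : arr3) (a b c e1 e2 e3 : int) : CC :=
  let z i j k := x (a + e1 * i) (b + e2 * j) (c + e3 * k) in
  2^-1 * (z 1 1 1 * z 0 0 0 ^+ 2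
          - z 0 0 0 * (z 1 0 0 * z 0 1 1 + z 0 1 0 * z 1 0 1 + z 0 0 1 * z 1 1 0))
  - z 1 0 0 * z 0 1 0 * z 0 0 1.

Definition signs : seq int := [:: 1; -1].

Definition cube_prod (x : arr3) (a b c : int) : CC :=
  \prod_(e1 <- signs) \prod_(e2 <- signs) \prod_(e3 <- signs)
     KCv x a b c e1 e2 e3.

Definition sq_term (x : arr3) (a b c : int) (p q : int * int * int) : CC :=
  let: (p1, p2, p3) := p in
  let: (q1, q2, q3) := q in
  x a b c * x (a + p1 + q1) (b + p2 + q2) (c + p3 + q3)
  + x (a + p1) (b + p2) (c + p3) * x (a + q1) (b + q2) (c + q3).

(** Product over the 12 unit squares containing v: in each of the three
    coordinate planes, the 4 squares spanned by e*e_i and d*e_j with signs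
    e,d in {1,-1}. *)
Definition square_prod (x : arr3) (a b c : int) : CC :=
  \prod_(e <- signs) \prod_(d <- signs)
    (sq_term x a b c (e, 0, 0) (0, d, 0)
     * sq_term x a b c (e, 0, 0) (0, 0, d)
     * sq_term x a b c (0, e, 0) (0, 0, d)).

Definition coherent_Kashaev (x : arr3) : Prop :=
  (forall a b c : int, KC x a b c = 0) /\
  (forall a b c : int, cube_prod x a b c = square_prod x a b c).

(** The lattice L = Z^3 + {(0,0,0),(0,1/2,1/2),(1/2,0,1/2),(1/2,1/2,0)} is
    represented in doubled coordinates: the point s in L corresponds to
    2s in Z^3 (which has even coordinate sum).  An array on L is a function
    y : int -> int -> int -> CC whose values at points with odd coordinate
    sum are irrelevant. *)
Definition restrZ3 (y : arr3) : arr3 := fun a b c => y (2 * a) (2 * b) (2 * c).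

(** Equations (i): every s in L \ Z^3 is the centre of exactly one unit
    square, of the form v + (0,1/2,1/2), v + (1/2,0,1/2) or v + (1/2,1/2,0)
    with v = (a,b,c) in Z^3; the vertices listed in cyclic order. *)
Definition Khex_i (y : arr3) : Prop :=
  forall a b c : int,
    let x := restrZ3 y in
    y (2 * a) (2 * b + 1) (2 * c + 1) ^+ 2
      = x a b c * x a (b + 1) (c + 1) + x a (b + 1) c * x a b (c + 1)
 /\ y (2 * a + 1) (2 * b) (2 * c + 1) ^+ 2
      = x a b c * x (a + 1) b (c + 1) + x (a + 1) b c * x a b (c + 1)
 /\ y (2 * a + 1) (2 * b + 1) (2 * c) ^+ 2
      = x a b c * x (a + 1) (b + 1) c + x (a + 1) b c * x a (b + 1) c.

Definition Khex_ii (y : arr3) : Prop :=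
  forall a b c : int,
    let z i j k := y (2 * a + i) (2 * b + j) (2 * c + k) in
    (* z i j k here takes DOUBLED offsets: z 2 1 1 = z_{1 1/2 1/2} *)
    let A := 2 * z 2 0 0 * z 0 2 0 * z 0 0 2
             + z 0 0 0 * (z 2 0 0 * z 0 2 2 + z 0 2 0 * z 2 0 2
                          + z 0 0 2 * z 2 2 0) in
    [/\ z 2 1 1 = (z 1 0 1 * z 1 1 0 + z 0 1 1 * z 2 0 0) / z 0 0 0,
        z 1 2 1 = (z 0 1 1 * z 1 1 0 + z 1 0 1 * z 0 2 0) / z 0 0 0,
        z 1 1 2 = (z 0 1 1 * z 1 0 1 + z 1 1 0 * z 0 0 2) / z 0 0 0 &
        z 2 2 2 = (A + 2 * z 0 1 1 * z 1 0 1 * z 1 1 0) / z 0 0 0 ^+ 2].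

Definition K_hexahedron (y : arr3) : Prop := Khex_i y /\ Khex_ii y.

From mathcomp Require Import all_boot all_order all_algebra.
From mathcomp Require Import complex Rstruct.
From mathcomp Require Import ring zify.
From Stdlib Require Import FunctionalExtensionality.
Set Implicit Arguments.
Unset Strict Implicit.
Unset Printing Implicit Defensive.
Import GRing.Theory Num.Theory.
Local Open Scope ring_scope.

(* Part (b) is a computation on one unit cube: solving the K-hexahedron equations
   at its vertex 000 for z_111 and the three far face values shows K^C = 0 and that,
   at each of the eight vertices, K^C_v is, up to sign, the product of the three face
   values at that vertex.  Among the eight cubes at a vertex v, each of the twelve
   squares at v is a face of exactly two, which gives the coherence identity.
   In part (a) the face values must be square roots of x_v x_v2 + x_v1 x_v3 with
   f_x f_y f_z = K_v; the equations (ii) then say that along a line in direction e_i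
   the face value f_i is multiplied by a ratio determined by x alone.  Choosing a
   root at one point of each line and propagating gives the right squares, but only
   f_x f_y f_z = t_v K_v with a sign t_v = +-1.  Coherence forces the product of t
   over every unit cube to be 1, so t is a product of functions of (b,c), (a,c) and
   (a,b), which are absorbed into f_x, f_y and f_z respectively. *)

Lemma int_ind_step (P : int -> Prop) :
  P 0 -> (forall n, P n -> P (n + 1)) -> (forall n, P (n + 1) -> P n) ->
  forall n, P n.
Proof.
move=> P0 Pup Pdown; elim/int_rec => // n IH.
- by rewrite intS addrC; apply: Pup.
- by apply: Pdown; have -> : - n.+1%:Z + 1 = - n%:Z by lia.
Qed.

Lemma int_step_const (T : Type) (g : int -> T) :
  (forall n, g (n + 1) = g n) -> forall n, g n = g 0.
Proof.
by move=> gS; apply: int_ind_step => // n; rewrite gS.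
Qed.

Section SignFields.
Variable R : comPzRingType.

Lemma sqr1_mul_eq1 (s t : R) : s ^+ 2 = 1 -> s * t = 1 -> t = s.
Proof. by move=> s2 st; rewrite -[t]mul1r -s2 expr2 -mulrA st mulr1. Qed.

Lemma sqr1M (s t : R) : s ^+ 2 = 1 -> t ^+ 2 = 1 -> (s * t) ^+ 2 = 1.
Proof. by move=> s2 t2; rewrite exprMn s2 t2 mulr1. Qed.

Lemma sign_field2_split (nu : int -> int -> R) :
  (forall b c, nu b c ^+ 2 = 1) ->
  (forall b c, nu b c * nu (b + 1) c * nu b (c + 1) * nu (b + 1) (c + 1) = 1) ->
  forall b c, nu b c = nu b 0 * nu 0 c * nu 0 0.
Proof.
move=> nu_sqr nu_square b c.
have edge c' : nu b c' * nu b (c' + 1) = nu 0 c' * nu 0 (c' + 1).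
  apply: (@int_step_const _ (fun b' => nu b' c' * nu b' (c' + 1))) => b'.
  apply: sqr1_mul_eq1; first exact: sqr1M.
  by rewrite -(nu_square b' c'); ring.
have corner : nu b c * nu 0 c = nu b 0 * nu 0 0.
  apply: (@int_step_const _ (fun c' => nu b c' * nu 0 c')) => c'.
  transitivity (nu b c' * (nu b c' * nu b (c' + 1)) * nu 0 (c' + 1)).
    by rewrite mulrA -expr2 nu_sqr mul1r.
  by rewrite edge -[RHS]mulr1 -(nu_sqr 0 (c' + 1)); ring.
by rewrite -[LHS]mulr1 -(nu_sqr 0 c) expr2 mulrA corner; ring.
Qed.

Definition cube_mul (s : int -> int -> int -> R) p q r :=
  s p q r * s (p + 1) q r * s p (q + 1) r * s (p + 1) (q + 1) r *
  s p q (r + 1) * s (p + 1) q (r + 1) * s p (q + 1) (r + 1) * s (p + 1) (q + 1) (r + 1).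

Lemma sign_field3_split (s : int -> int -> int -> R) :
  (forall a b c, s a b c ^+ 2 = 1) -> (forall p q r, cube_mul s p q r = 1) ->
  forall a b c, s a b c = s 0 b c * s a 0 c * s 0 0 c * s a b 0 * s 0 b 0 * s a 0 0 * s 0 0 0.
Proof.
move=> s_sqr s_cube a.
pose slab a' b c := s a' b c * s a' (b + 1) c * s a' b (c + 1) * s a' (b + 1) (c + 1).
have slab_const b c : slab a b c = slab 0 b c.
  apply: (@int_step_const _ (fun a' => slab a' b c)) => a'.
  apply: sqr1_mul_eq1; first by rewrite /slab !exprMn !s_sqr !mulr1.
  by rewrite -(s_cube a' b c) /slab /cube_mul; ring.
pose nu b c := s a b c * s 0 b c.
have nu_sqr b c : nu b c ^+ 2 = 1 by rewrite exprMn !s_sqr mulr1.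
have nu_square b c : nu b c * nu (b + 1) c * nu b (c + 1) * nu (b + 1) (c + 1) = 1.
  transitivity (slab a b c * slab 0 b c); first by rewrite /nu /slab; ring.
  by rewrite slab_const -expr2 /slab !exprMn !s_sqr !mulr1.
move=> b c; have := sign_field2_split nu_sqr nu_square b c; rewrite /nu => split2.
by rewrite -[LHS]mulr1 -(s_sqr 0 b c) expr2 mulrA split2; ring.
Qed.

End SignFields.

Section IntRecurrence.
Variables (F : fieldType) (R : int -> F).
Hypothesis R_neq0 : forall n, R n != 0.

Definition rec_prod (s0 : F) (n : int) : F :=
  match n with
  | Posz k => s0 * \prod_(i < k) R i
  | Negz k => s0 / \prod_(i < k.+1) R (Negz i)
  end.

Lemma rec_prod0 s0 : rec_prod s0 0 = s0.
Proof. by rewrite /rec_prod /= big_ord0 mulr1. Qed.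

Lemma rec_prodS s0 n : rec_prod s0 (n + 1) = R n * rec_prod s0 n.
Proof.
case: n => [k|[|k]].
- have -> : Posz k + 1 = Posz k.+1 by lia.
  by rewrite /rec_prod big_ord_recr /=; ring.
- have -> : Negz 0 + 1 = 0 by lia.
  rewrite rec_prod0 /rec_prod big_ord_recr big_ord0 /= mul1r.
  by field; rewrite R_neq0.
- have -> : Negz k.+1 + 1 = Negz k by lia.
  rewrite /rec_prod [in RHS]big_ord_recr /=.
  have prod_neq0 : \prod_(i < k.+1) R (Negz i) != 0.
    by rewrite prodf_seq_neq0; apply/allP => i _; rewrite R_neq0.
  by field; rewrite prod_neq0 R_neq0.
Qed.

Lemma rec_prod_sqr s0 (G : int -> F) :
  (forall n, G (n + 1) = R n ^+ 2 * G n) -> s0 ^+ 2 = G 0 ->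
  forall n, rec_prod s0 n ^+ 2 = G n.
Proof.
move=> GS G0; apply: int_ind_step; first by rewrite rec_prod0.
- by move=> n IH; rewrite rec_prodS GS -IH exprMn.
- move=> n; rewrite rec_prodS GS exprMn => /mulfI; apply.
  by rewrite expf_neq0.
Qed.

End IntRecurrence.

Lemma neq0_of_sqr (z : CC) : z ^+ 2 != 0 -> z != 0.
Proof. by rewrite expf_eq0. Qed.

Definition faceX (x : arr3) a b c :=
  x a b c * x a (b + 1) (c + 1) + x a (b + 1) c * x a b (c + 1).
Definition faceY (x : arr3) a b c :=
  x a b c * x (a + 1) b (c + 1) + x (a + 1) b c * x a b (c + 1).
Definition faceZ (x : arr3) a b c :=
  x a b c * x (a + 1) (b + 1) c + x (a + 1) b c * x a (b + 1) c.

Definition Kcorner (x : arr3) a b c := KCv x a b c 1 1 1.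

Definition hexA (x : arr3) a b c :=
  2 * x (a + 1) b c * x a (b + 1) c * x a b (c + 1)
  + x a b c * (x (a + 1) b c * x a (b + 1) (c + 1) + x a (b + 1) c * x (a + 1) b (c + 1)
               + x a b (c + 1) * x (a + 1) (b + 1) c).

Lemma KCvE x a b c e1 e2 e3 : KCv x a b c e1 e2 e3 =
  2^-1 * (x (a + e1) (b + e2) (c + e3) * x a b c ^+ 2
          - x a b c * (x (a + e1) b c * x a (b + e2) (c + e3)
                       + x a (b + e2) c * x (a + e1) b (c + e3)
                       + x a b (c + e3) * x (a + e1) (b + e2) c))
  - x (a + e1) b c * x a (b + e2) c * x a b (c + e3).
Proof. by rewrite /KCv !mulr1 !mulr0 !addr0. Qed.

Lemma Kcorner_top x a b c : x a b c != 0 ->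
  x (a + 1) (b + 1) (c + 1) = (hexA x a b c + 2 * Kcorner x a b c) / x a b c ^+ 2.
Proof.
move=> x_neq0; rewrite /Kcorner KCvE /hexA; field.
by rewrite x_neq0.
Qed.

Lemma Kcorner_sqr_KC x a b c :
  4 * (Kcorner x a b c ^+ 2 - faceX x a b c * faceY x a b c * faceZ x a b c)
  = x a b c ^+ 2 * KC x a b c.
Proof. by rewrite /Kcorner KCvE /faceX /faceY /faceZ /KC !addr0; field. Qed.

Lemma Kcorner_sqr x a b c : KC x a b c = 0 ->
  Kcorner x a b c ^+ 2 = faceX x a b c * faceY x a b c * faceZ x a b c.
Proof.
move=> KC0; apply/eqP; rewrite -subr_eq0.
have /eqP := Kcorner_sqr_KC x a b c; rewrite KC0 mulr0 mulf_eq0 => /orP[|//].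
by rewrite pnatr_eq0.
Qed.

Definition face_sqrts (x fx fy fz : arr3) a b c : Prop :=
  [/\ fx a b c ^+ 2 = faceX x a b c, fy a b c ^+ 2 = faceY x a b c &
      fz a b c ^+ 2 = faceZ x a b c].

Definition Khex_step (x fx fy fz : arr3) a b c : Prop :=
  [/\ fx (a + 1) b c = (fy a b c * fz a b c + fx a b c * x (a + 1) b c) / x a b c,
      fy a (b + 1) c = (fx a b c * fz a b c + fy a b c * x a (b + 1) c) / x a b c,
      fz a b (c + 1) = (fx a b c * fy a b c + fz a b c * x a b (c + 1)) / x a b c &
      x (a + 1) (b + 1) (c + 1)
        = (hexA x a b c + 2 * fx a b c * fy a b c * fz a b c) / x a b c ^+ 2].

Definition Khex_arrays (x fx fy fz : arr3) : Prop :=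
  forall a b c, face_sqrts x fx fy fz a b c /\ Khex_step x fx fy fz a b c.

Definition cube_corners (x fx fy fz : arr3) p q r : Prop :=
  [/\ KCv x p q r 1 1 1 = fx p q r * fy p q r * fz p q r,
      KCv x (p + 1) q r (-1) 1 1 = - (fx (p + 1) q r * fy p q r * fz p q r),
      KCv x p (q + 1) r 1 (-1) 1 = - (fx p q r * fy p (q + 1) r * fz p q r) &
      KCv x p q (r + 1) 1 1 (-1) = - (fx p q r * fy p q r * fz p q (r + 1))]
  /\
  [/\ KCv x (p + 1) (q + 1) r (-1) (-1) 1 = - (fx (p + 1) q r * fy p (q + 1) r * fz p q r),
      KCv x (p + 1) q (r + 1) (-1) 1 (-1) = - (fx (p + 1) q r * fy p q r * fz p q (r + 1)),
      KCv x p (q + 1) (r + 1) 1 (-1) (-1) = - (fx p q r * fy p (q + 1) r * fz p q (r + 1)) &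
      KCv x (p + 1) (q + 1) (r + 1) (-1) (-1) (-1)
        = fx (p + 1) q r * fy p (q + 1) r * fz p q (r + 1)].

Section HexCube.
Variables (x fx fy fz : arr3) (p q r : int).
Hypotheses (x_neq0 : x p q r != 0) (sqrts : face_sqrts x fx fy fz p q r)
           (step : Khex_step x fx fy fz p q r).

Let x011E : x p (q + 1) (r + 1) = (fx p q r ^+ 2 - x p (q + 1) r * x p q (r + 1)) / x p q r.
Proof. by case: sqrts => -> _ _; rewrite /faceX; field. Qed.
Let x101E : x (p + 1) q (r + 1) = (fy p q r ^+ 2 - x (p + 1) q r * x p q (r + 1)) / x p q r.
Proof. by case: sqrts => _ -> _; rewrite /faceY; field. Qed.
Let x110E : x (p + 1) (q + 1) r = (fz p q r ^+ 2 - x (p + 1) q r * x p (q + 1) r) / x p q r.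
Proof. by case: sqrts => _ _ ->; rewrite /faceZ; field. Qed.

Lemma Khex_KC_eq0 : KC x p q r = 0.
Proof.
rewrite /KC !addr0; have [_ _ _ ->] := step; rewrite /hexA x011E x101E x110E.
by field; rewrite x_neq0.
Qed.

Lemma Khex_cube_corners : cube_corners x fx fy fz p q r.
Proof.
rewrite /cube_corners !KCvE !addrK; have [-> -> -> ->] := step.
rewrite /hexA x011E x101E x110E.
by split; split; field; rewrite x_neq0.
Qed.

End HexCube.

Lemma square_prod_faces x p q r : square_prod x (p + 1) (q + 1) (r + 1) =
  (faceZ x (p + 1) (q + 1) (r + 1) * faceZ x (p + 1) q (r + 1)
     * faceZ x p (q + 1) (r + 1) * faceZ x p q (r + 1)) *
  (faceY x (p + 1) (q + 1) (r + 1) * faceY x (p + 1) (q + 1) r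
     * faceY x p (q + 1) (r + 1) * faceY x p (q + 1) r) *
  (faceX x (p + 1) (q + 1) (r + 1) * faceX x (p + 1) (q + 1) r
     * faceX x (p + 1) q (r + 1) * faceX x (p + 1) q r).
Proof.
rewrite /square_prod /signs !big_cons !big_nil /sq_term /= !addr0 !addrK.
by rewrite /faceX /faceY /faceZ; ring.
Qed.

Lemma cube_prod_factor (x fx fy fz : arr3) (s : int -> int -> int -> CC) p q r :
  (forall a b c, face_sqrts x fx fy fz a b c) ->
  (forall a b c, cube_corners x fx fy (fun i j k => s a b c * fz i j k) a b c) ->
  cube_prod x (p + 1) (q + 1) (r + 1)
  = cube_mul s p q r * square_prod x (p + 1) (q + 1) (r + 1).
Proof.
move=> sqrts corners.
have EX a b c : faceX x a b c = fx a b c ^+ 2 by case: (sqrts a b c).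
have EY a b c : faceY x a b c = fy a b c ^+ 2 by case: (sqrts a b c).
have EZ a b c : faceZ x a b c = fz a b c ^+ 2 by case: (sqrts a b c).
rewrite square_prod_faces /cube_prod /signs !big_cons !big_nil.
have [[-> _ _ _] _] := corners (p + 1) (q + 1) (r + 1).
have [[_ -> _ _] _] := corners p (q + 1) (r + 1).
have [[_ _ -> _] _] := corners (p + 1) q (r + 1).
have [[_ _ _ ->] _] := corners (p + 1) (q + 1) r.
have [_ [-> _ _ _]] := corners p q (r + 1).
have [_ [_ -> _ _]] := corners p (q + 1) r.
have [_ [_ _ -> _]] := corners (p + 1) q r.
have [_ [_ _ _ ->]] := corners p q r.
by rewrite !EX !EY !EZ /cube_mul; ring.
Qed.

Lemma coherent_of_Khex_arrays (x fx fy fz : arr3) :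
  (forall a b c, x a b c != 0) -> Khex_arrays x fx fy fz -> coherent_Kashaev x.
Proof.
move=> x_neq0 hex; split=> a b c.
  by have [sqrts step] := hex a b c; exact: Khex_KC_eq0 (x_neq0 a b c) sqrts step.
have untwisted : (fun i j k => 1 * fz i j k) = fz.
  by do 3!apply: functional_extensionality => ?; rewrite mul1r.
rewrite -[a](subrK 1) -[b](subrK 1) -[c](subrK 1).
rewrite (@cube_prod_factor x fx fy fz (fun _ _ _ => 1)); first by rewrite /cube_mul !mul1r.
  by move=> a' b' c'; case: (hex a' b' c').
move=> a' b' c'; have [sqrts step] := hex a' b' c'.
by rewrite untwisted; exact: Khex_cube_corners (x_neq0 a' b' c') sqrts step.
Qed.

Definition centreX (y : arr3) a b c := y (2 * a) (2 * b + 1) (2 * c + 1).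
Definition centreY (y : arr3) a b c := y (2 * a + 1) (2 * b) (2 * c + 1).
Definition centreZ (y : arr3) a b c := y (2 * a + 1) (2 * b + 1) (2 * c).

Lemma K_hexahedronE y :
  K_hexahedron y <-> Khex_arrays (restrZ3 y) (centreX y) (centreY y) (centreZ y).
Proof.
have two_step t : 2 * t + 2 = 2 * (t + 1) :> int by rewrite mulrDr mulr1.
split.
- move=> [hex_i hex_ii] a b c; have [EX [EY EZ]] := hex_i a b c.
  have := hex_ii a b c; rewrite /= !addr0 !two_step => step.
  by split; first split.
- move=> hex; split=> a b c; have [[EX EY EZ] step] := hex a b c; first by [].
  by rewrite /= !addr0 !two_step; exact: step.
Qed.

Definition hex_extension (x fx fy fz : arr3) : arr3 := fun i j k =>
  let a := (i %/ 2)%Z in let b := (j %/ 2)%Z in let c := (k %/ 2)%Z in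
  match (i %% 2 == 0)%Z, (j %% 2 == 0)%Z, (k %% 2 == 0)%Z with
  | true, true, true => x a b c
  | true, false, false => fx a b c
  | false, true, false => fy a b c
  | false, false, true => fz a b c
  | _, _, _ => 0
  end.

Lemma hex_extensionE (x fx fy fz : arr3) :
  let y := hex_extension x fx fy fz in
  [/\ restrZ3 y = x, centreX y = fx, centreY y = fy & centreZ y = fz].
Proof.
have div_even t : ((2 * t) %/ 2)%Z = t by rewrite mulKz.
have mod_even t : ((2 * t) %% 2)%Z = 0 by rewrite modzMr.
have div_odd t : ((2 * t + 1) %/ 2)%Z = t.
  by rewrite mulrC divzMDl // divz_small ?addr0.
have mod_odd t : ((2 * t + 1) %% 2)%Z = 1 by rewrite mulrC modzMDl modz_small.
by split; do 3!apply: functional_extensionality => ?;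
  rewrite /restrZ3 /centreX /centreY /centreZ /hex_extension
    ?div_even ?mod_even ?div_odd ?mod_odd eqxx ?oner_eq0.
Qed.

Lemma Khex_extension (x fx fy fz : arr3) :
  Khex_arrays x fx fy fz -> exists y, restrZ3 y = x /\ K_hexahedron y.
Proof.
have [ext_x ext_fx ext_fy ext_fz] := hex_extensionE x fx fy fz.
by exists (hex_extension x fx fy fz); rewrite K_hexahedronE ext_x ext_fx ext_fy ext_fz.
Qed.

Section CoherentToHexahedron.
Variable x : arr3.
Hypotheses (x_neq0 : forall a b c, x a b c != 0)
           (KC_x : forall a b c, KC x a b c = 0)
           (coherent_x : forall a b c, cube_prod x a b c = square_prod x a b c).
Hypotheses (faceX_neq0 : forall a b c, faceX x a b c != 0)
           (faceY_neq0 : forall a b c, faceY x a b c != 0)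
           (faceZ_neq0 : forall a b c, faceZ x a b c != 0).

(* If f_x ^+ 2 = faceX and f_x f_y f_z = Kcorner, the first equation of (ii)
   reads f_x (v + e1) = ratioX v * f_x v; similarly for ratioY and ratioZ. *)
Definition ratioX a b c := (Kcorner x a b c / faceX x a b c + x (a + 1) b c) / x a b c.
Definition ratioY a b c := (Kcorner x a b c / faceY x a b c + x a (b + 1) c) / x a b c.
Definition ratioZ a b c := (Kcorner x a b c / faceZ x a b c + x a b (c + 1)) / x a b c.

Lemma ratio_sqr a b c :
  [/\ ratioX a b c ^+ 2 * faceX x a b c = faceX x (a + 1) b c,
      ratioY a b c ^+ 2 * faceY x a b c = faceY x a (b + 1) c &
      ratioZ a b c ^+ 2 * faceZ x a b c = faceZ x a b (c + 1)].
Proof.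
have K2 := Kcorner_sqr (KC_x a b c).
have x111E := Kcorner_top (x_neq0 a b c).
have n0 := x_neq0 a b c; have nX := faceX_neq0 a b c.
have nY := faceY_neq0 a b c; have nZ := faceZ_neq0 a b c.
split.
- have FYZ : faceY x a b c * faceZ x a b c = Kcorner x a b c ^+ 2 / faceX x a b c.
    by rewrite K2; field.
  transitivity ((faceY x a b c * faceZ x a b c + 2 * Kcorner x a b c * x (a + 1) b c
                 + x (a + 1) b c ^+ 2 * faceX x a b c) / x a b c ^+ 2).
    by rewrite FYZ /ratioX; field; rewrite n0 nX.
  by rewrite [RHS]/faceX x111E /hexA /faceX /faceY /faceZ; field.
- have FXZ : faceX x a b c * faceZ x a b c = Kcorner x a b c ^+ 2 / faceY x a b c.
    by rewrite K2; field.
  transitivity ((faceX x a b c * faceZ x a b c + 2 * Kcorner x a b c * x a (b + 1) c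
                 + x a (b + 1) c ^+ 2 * faceY x a b c) / x a b c ^+ 2).
    by rewrite FXZ /ratioY; field; rewrite n0 nY.
  by rewrite [RHS]/faceY x111E /hexA /faceX /faceY /faceZ; field.
- have FXY : faceX x a b c * faceY x a b c = Kcorner x a b c ^+ 2 / faceZ x a b c.
    by rewrite K2; field.
  transitivity ((faceX x a b c * faceY x a b c + 2 * Kcorner x a b c * x a b (c + 1)
                 + x a b (c + 1) ^+ 2 * faceZ x a b c) / x a b c ^+ 2).
    by rewrite FXY /ratioZ; field; rewrite n0 nZ.
  by rewrite [RHS]/faceZ x111E /hexA /faceX /faceY /faceZ; field.
Qed.

Lemma ratio_neq0 a b c : [/\ ratioX a b c != 0, ratioY a b c != 0 & ratioZ a b c != 0].
Proof.
have [EX EY EZ] := ratio_sqr a b c.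
split; [move: (faceX_neq0 (a + 1) b c); rewrite -EX | move: (faceY_neq0 a (b + 1) c);
  rewrite -EY | move: (faceZ_neq0 a b (c + 1)); rewrite -EZ];
  by rewrite mulf_eq0 negb_or => /andP[/neq0_of_sqr].
Qed.

Definition propX a b c := rec_prod (fun n => ratioX n b c) (sqrtC (faceX x 0 b c)) a.
Definition propY a b c := rec_prod (fun n => ratioY a n c) (sqrtC (faceY x a 0 c)) b.
Definition propZ a b c := rec_prod (fun n => ratioZ a b n) (sqrtC (faceZ x a b 0)) c.

Lemma prop_face_sqrts a b c : face_sqrts x propX propY propZ a b c.
Proof.
split.
- apply: (rec_prod_sqr _ (G := fun n => faceX x n b c)); rewrite ?sqrtCK // => n.
    by case: (ratio_neq0 n b c).
  by case: (ratio_sqr n b c).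
- apply: (rec_prod_sqr _ (G := fun n => faceY x a n c)); rewrite ?sqrtCK // => n.
    by case: (ratio_neq0 a n c).
  by case: (ratio_sqr a n c).
- apply: (rec_prod_sqr _ (G := fun n => faceZ x a b n)); rewrite ?sqrtCK // => n.
    by case: (ratio_neq0 a b n).
  by case: (ratio_sqr a b n).
Qed.

Lemma propS a b c :
  [/\ propX (a + 1) b c = ratioX a b c * propX a b c,
      propY a (b + 1) c = ratioY a b c * propY a b c &
      propZ a b (c + 1) = ratioZ a b c * propZ a b c].
Proof.
split; apply: rec_prodS => n.
- by case: (ratio_neq0 n b c).
- by case: (ratio_neq0 a n c).
- by case: (ratio_neq0 a b n).
Qed.

Lemma Khex_step_of_ratios (fx fy fz : arr3) a b c :
  face_sqrts x fx fy fz a b c ->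
  fx (a + 1) b c = ratioX a b c * fx a b c ->
  fy a (b + 1) c = ratioY a b c * fy a b c ->
  fz a b (c + 1) = ratioZ a b c * fz a b c ->
  fx a b c * fy a b c * fz a b c = Kcorner x a b c ->
  Khex_step x fx fy fz a b c.
Proof.
move=> [EX EY EZ] SX SY SZ K.
have [nx ny nz] : [/\ fx a b c != 0, fy a b c != 0 & fz a b c != 0].
  by split; apply: neq0_of_sqr; rewrite ?EX ?EY ?EZ.
have n0 := x_neq0 a b c.
split.
- by rewrite SX /ratioX -K -EX; field; rewrite n0 nx.
- by rewrite SY /ratioY -K -EY; field; rewrite n0 ny.
- by rewrite SZ /ratioZ -K -EZ; field; rewrite n0 nz.
- by rewrite (Kcorner_top n0) -K !mulrA.
Qed.

Lemma Kcorner_neq0 a b c : Kcorner x a b c != 0.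
Proof. by apply: neq0_of_sqr; rewrite Kcorner_sqr // !mulf_neq0. Qed.

Definition twist a b c := propX a b c * propY a b c * propZ a b c / Kcorner x a b c.

Lemma twist_sqr a b c : twist a b c ^+ 2 = 1.
Proof.
have [EX EY EZ] := prop_face_sqrts a b c.
rewrite /twist !exprMn exprVn EX EY EZ -Kcorner_sqr // mulfV //.
by rewrite expf_neq0 // Kcorner_neq0.
Qed.

Lemma twist_prod a b c :
  propX a b c * propY a b c * (twist a b c * propZ a b c) = Kcorner x a b c.
Proof.
have PK : propX a b c * propY a b c * propZ a b c = twist a b c * Kcorner x a b c.
  by rewrite /twist divfK ?Kcorner_neq0.
transitivity (twist a b c * (propX a b c * propY a b c * propZ a b c)); first by ring.
by rewrite PK mulrA -expr2 twist_sqr mul1r.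
Qed.

Lemma twisted_cube_corners p q r :
  cube_corners x propX propY (fun i j k => twist p q r * propZ i j k) p q r.
Proof.
have [EX EY EZ] := prop_face_sqrts p q r; have [SX SY SZ] := propS p q r.
have sqrts : face_sqrts x propX propY (fun i j k => twist p q r * propZ i j k) p q r.
  by split; rewrite // exprMn twist_sqr mul1r.
apply: (Khex_cube_corners (x_neq0 p q r) sqrts).
apply: Khex_step_of_ratios => //; last exact: twist_prod.
by rewrite /= SZ mulrCA.
Qed.

Lemma twist_cube_mul p q r : cube_mul twist p q r = 1.
Proof.
have SP_neq0 : square_prod x (p + 1) (q + 1) (r + 1) != 0.
  by rewrite square_prod_faces !mulf_neq0.
apply: (mulIf SP_neq0).
by rewrite mul1r -(cube_prod_factor p q r prop_face_sqrts twisted_cube_corners) coherent_x.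
Qed.

Definition gaugeX b c := twist 0 b c.
Definition gaugeY a c := twist a 0 c * twist 0 0 c.
Definition gaugeZ a b := twist a b 0 * twist 0 b 0 * twist a 0 0 * twist 0 0 0.

Definition hexX a b c := gaugeX b c * propX a b c.
Definition hexY a b c := gaugeY a c * propY a b c.
Definition hexZ a b c := gaugeZ a b * propZ a b c.

Lemma gauge_sqr a b c : [/\ gaugeX b c ^+ 2 = 1, gaugeY a c ^+ 2 = 1 & gaugeZ a b ^+ 2 = 1].
Proof.
split; first exact: twist_sqr.
  exact: sqr1M (twist_sqr a 0 c) (twist_sqr 0 0 c).
exact: sqr1M (sqr1M (sqr1M (twist_sqr a b 0) (twist_sqr 0 b 0)) (twist_sqr a 0 0))
             (twist_sqr 0 0 0).
Qed.

Lemma Khex_arrays_of_coherent : Khex_arrays x hexX hexY hexZ.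
Proof.
move=> a b c; have [EX EY EZ] := prop_face_sqrts a b c; have [SX SY SZ] := propS a b c.
have sqrts : face_sqrts x hexX hexY hexZ a b c.
  have [GX GY GZ] := gauge_sqr a b c.
  by split; rewrite /hexX /hexY /hexZ exprMn ?GX ?GY ?GZ mul1r.
split=> //; apply: Khex_step_of_ratios => //.
- by rewrite /hexX SX mulrCA.
- by rewrite /hexY SY mulrCA.
- by rewrite /hexZ SZ mulrCA.
rewrite -(twist_prod a b c) (sign_field3_split twist_sqr twist_cube_mul a b c).
by rewrite /hexX /hexY /hexZ /gaugeX /gaugeY /gaugeZ; ring.
Qed.

End CoherentToHexahedron.

Theorem theorem2p22 :
  (* (a) *)
  (forall x : arr3,
     (forall a b c : int, x a b c != 0) ->
     coherent_Kashaev x ->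
     (forall a b c : int,
        x a b c * x (a + 1) (b + 1) c + x (a + 1) b c * x a (b + 1) c != 0 /\
        x a b c * x (a + 1) b (c + 1) + x (a + 1) b c * x a b (c + 1) != 0 /\
        x a b c * x a (b + 1) (c + 1) + x a (b + 1) c * x a b (c + 1) != 0) ->
     exists y : arr3, restrZ3 y = x /\ K_hexahedron y)
  /\
  (* (b) *)
  (forall y : arr3,
     (forall a b c : int, restrZ3 y a b c != 0) ->
     K_hexahedron y ->
     coherent_Kashaev (restrZ3 y)).
Proof.
split.
- move=> x x_neq0 [KC_x coherent_x] faces_neq0.
  apply: Khex_extension (Khex_arrays_of_coherent x_neq0 KC_x coherent_x _ _ _) => a b c;
    by case: (faces_neq0 a b c) => [? []].
- by move=> y y_neq0 /K_hexahedronE; apply: coherent_of_Khex_arrays.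
Qed.
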